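(* Let $G=(V,E)$ be an undirected, unweighted, 2-edge-connected graph and let $T$ be a spanning tree of $G$. Fix an edge $e$ of $T$, and let $X$ and $Y=V\setminus X$ be the vertex sets of the two connected components of $T-e$. Let $S_e$ be the set of swap edges of $e$; write every $g\in S_e$ as $g=(a,b)$ with $a\in X$, $b\in Y$. For $x\in X$ and $g=(a,b),g'=(a',b')\in S_e$ (not necessarily distinct) put $$\phi_x(g,g') := d_T(x,a)+d_T(b,b')+d_T(a',x).$$ For every $x\in X$ fix a pair $(g_x,g'_x)\in \arg\max_{(g,g')\in S_e\times S_e}\phi_x(g,g')$, and write $g_x=(a_x,b_x)$, $g'_x=(a'_x,b'_x)$ with $a_x,a'_x\in X$ and $b_x,b'_x\in Y$. Let $T_X$ be the subtree of $T$ induced by $X$, and for an edge $e'=(u,v)$ of $T_X$ let $U(e',u)$ and $U(e',v)$ denote the vertex sets of the connected components of $T_X-e'$ containing $u$ and $v$, respectively. Let $e'=(x,z)$ be an edge of $T_X$ such that $\phi_z(g_x,g'_x)<\phi_z(g_z,g'_z)$. Then at least one of the following holds: (i) $a_z,a'_z\in U(e',x)$ and $\{a_x,a'_x\}\cap U(e',z)\neq\emptyset$; (ii) $a_x,a'_x\in U(e',z)$ and $\{a_z,a'_z\}\cap U(e',x)\neq\emptyset$.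
   Context: $d_T(u,v)$ denotes the number of edges on the unique path between $u$ and $v$ in the tree $T$. For an edge $e$ of $T$, the set $S_e$ of swap edges of $e$ consists of all edges of $E\setminus\{e\}$ whose endpoints lie in different connected components of $T-e$. *)

From mathcomp Require Import all_boot.
Set Implicit Arguments. Unset Strict Implicit. Unset Printing Implicit Defensive.

Section Graphs.
Variable V : finType.

Definition remove_edge (r : rel V) (a b : V) : rel V :=
  fun u v => r u v && ~~ (((u == a) && (v == b)) || ((u == b) && (v == a))).

Definition simple_graph (r : rel V) : Prop :=
  symmetric r /\ irreflexive r.

Definition connected (r : rel V) : Prop := forall u v, connect r u v.

Definition two_edge_connected (G : rel V) : Prop :=
  connected G /\ forall a b, G a b -> connected (remove_edge G a b).

Definition acyclic (r : rel V) : Prop :=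
  forall c : seq V, uniq c -> 2 < size c -> ~~ cycle r c.

Definition spanning_tree (G T : rel V) : Prop :=
  symmetric T /\ subrel T G /\ connected T /\ acyclic T.

(* d_T(u,v): number of edges of a shortest walk from u to v in T (in a tree
   this is the number of edges of the unique path) *)
Definition dist (T : rel V) (u v : V) : nat :=
  find (fun n => [exists p : n.-tuple V, path T u p && (last u p == v)])
       (iota 0 #|V|).

Definition compX (T : rel V) (p q : V) : {set V} :=
  [set w | connect (remove_edge T p q) p w].

(* swap edges of e = (p,q), oriented as (a,b) with a in X, b in Y = V \ X *)
Definition is_swap (G T : rel V) (p q : V) (g : V * V) : bool :=
  [&& G g.1 g.2, g.1 \in compX T p q, g.2 \notin compX T p q
    & ~~ (((g.1 == p) && (g.2 == q)) || ((g.1 == q) && (g.2 == p)))].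

Definition phi (T : rel V) (x : V) (g g' : V * V) : nat :=
  dist T x g.1 + dist T g.2 g'.2 + dist T g'.1 x.

Definition subtree (T : rel V) (X : {set V}) : rel V :=
  fun u v => [&& T u v, u \in X & v \in X].

Definition compU (T : rel V) (X : {set V}) (u v : V) : {set V} :=
  [set w in X | connect (remove_edge (subtree T X) u v) u w].

End Graphs.

From mathcomp Require Import all_boot zify.
Set Implicit Arguments. Unset Strict Implicit.

(* Deleting the tree edge e' = (x,z) splits X into U(e',x) and U(e',z); every
   vertex of U(e',x) is one step closer to x than to z, and symmetrically.
   Hence moving the base point from x to z changes phi(g,g') by +1 or -1 for
   each of the two endpoints a, a' of g, g' in X, according to their side.
   Maximality of (g_x,g'_x) at x and the strict inequality at z then force
   the endpoints of (g_z,g'_z) to gain strictly more than those of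
   (g_x,g'_x), which leaves exactly the configurations (i) and (ii). *)

Section TreeDistance.
Variable V : finType.
Implicit Types (T : rel V) (u v x z a : V).

Lemma dist_le_size T u p : path T u p -> dist T u (last u p) <= size p.
Proof.
move=> Tp; rewrite /dist; set P := (fun n => _).
have [ltpV | leVp] := ltnP (size p) #|V|; last first.
  by apply: leq_trans (find_size _ _) _; rewrite size_iota.
rewrite leqNgt; apply/negP => /(before_find 0).
rewrite nth_iota // add0n => notP; suff : P (size p) by rewrite notP.
by apply/existsP; exists (in_tuple p); rewrite /= Tp eqxx.
Qed.

Lemma dist_path T u v : connect T u v ->
  exists p, [/\ path T u p, last u p = v & size p = dist T u v].
Proof.
case/connectP => p Tp ->; case: (shortenP Tp) => p' Tp' uniq_p' _.
have size_p' : size p' < #|V|.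
  by have := max_card (mem (u :: p')); rewrite (card_uniqP uniq_p').
have hasP : has (fun n => [exists t : n.-tuple V, path T u t && (last u t == last u p')])
                (iota 0 #|V|).
  by rewrite has_find size_iota; apply: leq_ltn_trans (dist_le_size Tp') _.
move: (nth_find 0 hasP); rewrite -/(dist T u (last u p')) nth_iota; last first.
  by move: hasP; rewrite has_find size_iota.
by rewrite add0n => /existsP [t /andP [Tt /eqP last_t]]; exists t; rewrite size_tuple.
Qed.

Lemma remove_edgeC T a b : remove_edge T a b =2 remove_edge T b a.
Proof.
move=> u v; rewrite /remove_edge.
by case: (u == a); case: (v == b); case: (u == b); case: (v == a); rewrite ?andbT ?andbF.
Qed.

Lemma connect_remove_edge T x z u : connect T x u ->
  connect (remove_edge T x z) x u || connect (remove_edge T x z) z u.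
Proof.
set side := fun w => connect (remove_edge T x z) x w || connect (remove_edge T x z) z w.
have side_walk w p : path T w p -> side w -> side (last w p).
  elim: p w => [|v p IHp] w //= /andP [Twv Tp] side_w; apply: IHp => //.
  case Rwv: (remove_edge T x z w v).
    by case/orP: side_w => side_w; apply/orP; [left | right];
      apply: connect_trans side_w (connect1 Rwv).
  move: Rwv; rewrite /remove_edge Twv => /negbFE.
  by case/orP => /andP [_ /eqP ->]; rewrite /side /= connect0 ?orbT.
by case/connectP => p Tp ->; apply: side_walk Tp _; rewrite /side /= connect0.
Qed.

Section Symmetric.
Variable T : rel V.
Hypothesis symT : symmetric T.

Lemma path_rev_belast u p : path T u p -> path T (last u p) (rev (belast u p)).
Proof. by rewrite rev_path (@eq_path _ _ T) // => a b; rewrite symT. Qed.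

Lemma last_rev_belast u p : last (last u p) (rev (belast u p)) = u.
Proof. by rewrite -[LHS]/(last u (last u p :: _)) -rev_rcons -lastI rev_cons last_rcons. Qed.

Lemma dist_sym u v : connect T u v -> dist T u v = dist T v u.
Proof.
have dist_le_rev a b : connect T a b -> dist T b a <= dist T a b.
  case/dist_path => p [Tp <- <-].
  by have := dist_le_size (path_rev_belast Tp); rewrite last_rev_belast size_rev size_belast.
move=> Tuv; have Tvu : connect T v u by rewrite (sym_connect_sym symT).
by apply/eqP; rewrite eqn_leq !dist_le_rev.
Qed.

Lemma remove_edge_sym a b : symmetric (remove_edge T a b).
Proof.
move=> u v; rewrite /remove_edge symT.
by case: (u == a); case: (v == b); case: (u == b); case: (v == a); rewrite ?andbT ?andbF.
Qed.

(* A walk entering the side of x from outside must use the edge z -> x,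
   so its remainder is a strictly shorter walk starting at x. *)
Lemma walk_enter_side x z u p : path T u p ->
  connect (remove_edge T x z) x (last u p) -> ~~ connect (remove_edge T x z) x u ->
  exists q, [/\ path T x q, last x q = last u p & size q < size p].
Proof.
elim: p u => [|v p IHp] u /=; first by move=> _ ->.
case/andP => Tuv Tp x_last x_notu.
have [x_v | x_notv] := boolP (connect (remove_edge T x z) x v); last first.
  by case: (IHp v Tp x_last x_notv) => q [Tq <- size_q]; exists q; split; rewrite // ltnW.
case Ruv: (remove_edge T x z u v).
  by move: x_notu; rewrite (connect_trans x_v) // connect1 // remove_edge_sym.
move: Ruv; rewrite /remove_edge Tuv => /negbFE /orP [] /andP [/eqP eu /eqP ev].
  by move: x_notu; rewrite eu connect0.
by exists p; rewrite -ev.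
Qed.

Lemma dist_remove_edge x z a : T z x -> ~~ connect (remove_edge T x z) x z ->
  connect (remove_edge T x z) x a -> dist T z a = (dist T x a).+1.
Proof.
move=> Tzx x_notz x_a.
have Txa : connect T x a.
  by apply: connect_sub x_a => u v /andP [Tuv _]; apply: connect1.
have [p [Tp last_p size_p]] := dist_path (connect_trans (connect1 Tzx) Txa).
rewrite -last_p in x_a; have [q [Tq last_q size_q]] := walk_enter_side Tp x_a x_notz.
have [r [Tr last_r size_r]] := dist_path Txa.
have := dist_le_size Tq; have : path T z (x :: r) by rewrite /= Tzx.
move/dist_le_size; rewrite /= last_r size_r last_q last_p; lia.
Qed.

Lemma phiE y g g' : connected T ->
  phi T y g g' = dist T y g.1 + dist T g.2 g'.2 + dist T y g'.1.
Proof. by move=> conT; rewrite /phi (dist_sym (conT g'.1 y)). Qed.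

End Symmetric.

(* A walk from x to z avoiding the edge {x,z}, shortened to a simple path and
   closed up by that edge, is a cycle on at least three vertices. *)
Lemma acyclic_remove_edge T x z : acyclic T -> T z x -> x != z ->
  ~~ connect (remove_edge T x z) x z.
Proof.
move=> acT Tzx neq_xz; apply/negP => /connectP [p Rp last_p].
move: last_p; case: (shortenP Rp) => {Rp}p Rp uniq_p _ last_p.
have Tp : path T x p by apply: sub_path Rp => u v /andP [].
case: p last_p Rp uniq_p Tp => [|v [|w p]] /= last_p.
- by move: neq_xz; rewrite last_p eqxx.
- by rewrite -last_p /remove_edge !eqxx andbF.
case/andP => _ _ uniq_p Tp; have := acT [:: x, v, w & p] uniq_p isT.
by rewrite /= rcons_path -last_p Tzx andbT Tp.
Qed.

End TreeDistance.

(* Passing from dx to dz shifts each pair sum by -2, 0 or +2; the b-pair must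
   gain strictly more than the a-pair, which leaves only the two outcomes. *)
Lemma shifted_sum_cases (A : finType) (D Ux Uz : {set A}) (dx dz : A -> nat)
    (a1 a2 b1 b2 : A) (c c' : nat) :
  {in D, forall a, (a \in Ux /\ dz a = (dx a).+1) \/ (a \in Uz /\ dx a = (dz a).+1)} ->
  a1 \in D -> a2 \in D -> b1 \in D -> b2 \in D ->
  dx b1 + c' + dx b2 <= dx a1 + c + dx a2 ->
  dz a1 + c + dz a2 < dz b1 + c' + dz b2 ->
  [/\ b1 \in Ux, b2 \in Ux & (a1 \in Uz) || (a2 \in Uz)] \/
  [/\ a1 \in Uz, a2 \in Uz & (b1 \in Ux) || (b2 \in Ux)].
Proof.
move=> side a1D a2D b1D b2D le_x lt_z.
move: (side _ a1D) (side _ a2D) (side _ b1D) (side _ b2D).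
case=> [[i1 ?] | [i1 ?]]; case=> [[i2 ?] | [i2 ?]];
case=> [[i3 ?] | [i3 ?]]; case=> [[i4 ?] | [i4 ?]];
first [ by left; rewrite ?i1 ?i2 ?i3 ?i4 ?orbT
      | by right; rewrite ?i1 ?i2 ?i3 ?i4 ?orbT
      | lia ].
Qed.

Section SwapSide.
Variables (V : finType) (T : rel V) (p q : V).
Hypothesis symT : symmetric T.
Let X := compX T p q.

Lemma connect_subtree_compX u v : u \in X -> v \in X -> connect (subtree T X) u v.
Proof.
have sym_R := sym_connect_sym (remove_edge_sym symT p q).
rewrite !inE => Ru Rv; have /connectP [r Rr ->] : connect (remove_edge T p q) u v.
  by rewrite sym_R in Ru; apply: connect_trans Ru Rv.
apply/connectP; exists r => //; elim: r u Ru Rr => [|w r IHr] u //= Ru /andP [Ruw Rr].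
have Rw : connect (remove_edge T p q) p w by apply: connect_trans Ru (connect1 Ruw).
by rewrite IHr // /subtree /X !inE Ru Rw !andbT; case/andP: Ruw => ->.
Qed.

Lemma connect_remove_edge_subtree a b u v :
  connect (remove_edge (subtree T X) a b) u v -> connect (remove_edge T a b) u v.
Proof.
apply: connect_sub => w w' /andP [/and3P [Tww' _ _] ab].
by apply: connect1; rewrite /remove_edge Tww'.
Qed.

Hypothesis acT : acyclic T.
Variables x z : V.
Hypotheses (Xxz : subtree T X x z) (neq_xz : x != z).

Lemma compU_dist a : a \in X ->
  (a \in compU T X x z /\ dist T z a = (dist T x a).+1) \/
  (a \in compU T X z x /\ dist T x a = (dist T z a).+1).
Proof.
case/and3P: Xxz => Txz xX zX aX; have Tzx : T z x by rewrite symT.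
case/orP: (connect_remove_edge z (connect_subtree_compX xX aX)) => [Ra | Ra].
  left; split; first by rewrite inE aX Ra.
  apply: dist_remove_edge (acyclic_remove_edge acT Tzx neq_xz) _ => //.
  exact: connect_remove_edge_subtree Ra.
rewrite (eq_connect (remove_edgeC _ x z)) in Ra.
right; split; first by rewrite inE aX Ra.
apply: dist_remove_edge Txz (acyclic_remove_edge acT Txz _) _ => //.
  by rewrite eq_sym.
exact: connect_remove_edge_subtree Ra.
Qed.

End SwapSide.

Theorem lemma1 (V : finType) (G T : rel V) (p q : V)
  (gsel : V -> (V * V) * (V * V)) (x z : V) :
  simple_graph G ->
  two_edge_connected G ->
  spanning_tree G T ->
  T p q ->
  (forall y, y \in compX T p q ->
     [/\ is_swap G T p q (gsel y).1, is_swap G T p q (gsel y).2 &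
         forall g g', is_swap G T p q g -> is_swap G T p q g' ->
           phi T y g g' <= phi T y (gsel y).1 (gsel y).2]) ->
  subtree T (compX T p q) x z ->
  phi T z (gsel x).1 (gsel x).2 < phi T z (gsel z).1 (gsel z).2 ->
  let X := compX T p q in
  let Ux := compU T X x z in
  let Uz := compU T X z x in
  let ax := (gsel x).1.1 in let ax' := (gsel x).2.1 in
  let az := (gsel z).1.1 in let az' := (gsel z).2.1 in
  ([/\ az \in Ux, az' \in Ux & (ax \in Uz) || (ax' \in Uz)])
  \/
  ([/\ ax \in Uz, ax' \in Uz & (az \in Ux) || (az' \in Ux)]).
Proof.
move=> [_ irrG] _ [symT [subTG [conT acT]]] _ gsel_max Xxz lt_z; cbv zeta.
have /and3P [Txz xX zX] := Xxz.
have neq_xz : x != z by apply: contraTneq (subTG _ _ Txz) => ->; rewrite irrG.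
have swapX g : is_swap G T p q g -> g.1 \in compX T p q by case/and4P.
have [swx1 swx2 max_x] := gsel_max x xX.
have [swz1 swz2 _] := gsel_max z zX.
have le_x := max_x _ _ swz1 swz2; rewrite !phiE // in le_x lt_z.
exact: shifted_sum_cases (compU_dist symT acT Xxz neq_xz)
  (swapX _ swx1) (swapX _ swx2) (swapX _ swz1) (swapX _ swz2) le_x lt_z.
Qed.
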